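(* Assume $\tilde R=R$ and $\tilde\Phi>\Phi$ (so $\tilde\rho>\rho$), that $c_A$ is convex and real-valued on $[0,\infty)$, that a maximizer $\tilde h_A$ of $\pi_{\tilde\rho}$ exists, that $\bar{\bar h}_A(h)<\infty$ for all $h\in(0,H)$, that $\bar{\bar h}_A$ is non-decreasing on $(0,H)$, and that $\hat h\in(0,H)$ satisfies $\hat h+\bar{\bar h}_A(\hat h)=H$. Then $0<\hat h<\tfrac12H$ and, if the miner's pre-attack hash power satisfies $h^*_A\in(\hat h,H)$, the incentive compatibility constraint $$\Big(\pi_{\rho}(h^*_A)-\pi_{\tilde\rho}\big(\max\{\tilde h_A,\underline h_A\}\big)\Big)\mathcal L\ \ge\ V_{attack}$$ fails for $V_{attack}=0$; i.e., there is no equilibrium without a majority attack even when the attack yields no private benefit.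
   Context: Proof-of-Work mining model. The aggregate hash power on the blockchain before an attack is $H>0$, the target time between blocks is $\tau>0$, and the difficulty is held fixed at $D=\tau H$, so a miner applying hash power $h$ alone on a chain mines in expectation $h/D$ blocks per unit of time. On the benchmark chain each block yields expected block reward $R\ge0$ and expected transaction fees $\Phi\ge0$; on the attacking chain the values are $\tilde R,\tilde\Phi$. Write $\rho=R+\Phi$, $\tilde\rho=\tilde R+\tilde\Phi$. The miner (potential attacker) $A$ has cost per unit time $c_A(h)$ of hash power $h\ge0$; flow profit at reward level $x$ is $\pi_x(h)=\frac hDx-c_A(h)$. $h^*_A$ is $A$'s pre-attack hash power (treated as a parameter in $(0,H)$); a successful attack requires at least $\underline h_A=\max\{\tfrac12H,H-h^*_A\}$; $\tilde h_A$ maximizes $\pi_{\tilde\rho}$ on $[0,\infty)$; $A$ attacks with $\max\{\tilde h_A,\underline h_A\}$; expected attack duration is $\mathcal L>0$. $V_{attack}\ge0$ is $A$'s private benefit from a successful attack. For $h\in(0,H)$, $\bar{\bar h}_A(h)=\sup\{h'>h:\pi_{\tilde\rho}(h')\ge\pi_\rho(h)\}$. *)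

From Stdlib Require Import Reals.
From Coquelicot Require Import Coquelicot.
Open Scope R_scope.

Definition convex_on_nonneg (c : R -> R) : Prop :=
  forall x y t, 0 <= x -> 0 <= y -> 0 <= t <= 1 ->
    c (t * x + (1 - t) * y) <= t * c x + (1 - t) * c y.

Definition difficulty (tau H : R) : R := tau * H.

Definition flow_profit (D : R) (c : R -> R) (x h : R) : R := h / D * x - c h.

(* Minimal hash power for a successful attack: max{H/2, H - h*_A}. *)
Definition h_low (H hstar : R) : R := Rmax (H / 2) (H - hstar).

(* hbarbar_A(h) = sup { h' > h : pi_rhot(h') >= pi_rho(h) }, as an extended real
   (Coquelicot's Lub_Rbar: +oo if unbounded, -oo if empty). *)
Definition hbarbar (D : R) (c : R -> R) (rho rhot h : R) : Rbar :=
  Lub_Rbar (fun h' => h < h' /\ flow_profit D c rhot h' >= flow_profit D c rho h).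

Definition ICC (D : R) (c : R -> R) (rho rhot H hstar htilde L Vattack : R) : Prop :=
  (flow_profit D c rho hstar
     - flow_profit D c rhot (Rmax htilde (h_low H hstar))) * L >= Vattack.

From Stdlib Require Import Reals Lra Classical.
From Coquelicot Require Import Coquelicot.
Open Scope R_scope.

(* The only structural fact used about the miner is that every flow profit
   h |-> h/D * x - c(h) is concave on [0, +oo), since c is convex.  Two
   elementary properties of concave functions drive the argument:
   - a strict inequality g(x) > m persists to some point to the right of x;
   - if g exceeds m strictly at a and weakly at d > a, it exceeds m strictly
     on the whole segment [a, d).
   The first one, applied to pi_rhot(hhat) > pi_rho(hhat), puts a point of
   the set defining hbarbar(hhat) above hhat, so H - hhat = hbarbar(hhat) >
   hhat, i.e. hhat < H/2.  For hstar in (hhat, H), monotonicity of hbarbar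
   gives hbarbar(hstar) >= H - hhat > h_low, hence a witness x' > h_low with
   pi_rhot(x') >= pi_rho(hstar); the maximiser htilde satisfies
   pi_rhot(htilde) >= pi_rhot(hstar) > pi_rho(hstar).  The second property
   then shows that attacking with max{htilde, h_low} is strictly more
   profitable than honest mining, so the ICC fails already for V_attack = 0. *)

Definition concave_on_nonneg (g : R -> R) : Prop :=
  forall x y t, 0 <= x -> 0 <= y -> 0 <= t <= 1 ->
    g (t * x + (1 - t) * y) >= t * g x + (1 - t) * g y.

(* Revenue is linear in hash power, so a convex cost makes profit concave. *)
Lemma flow_profit_concave (D x : R) (c : R -> R) :
  convex_on_nonneg c -> concave_on_nonneg (flow_profit D c x).
Proof.
  intros Hconv a b t Ha Hb Ht. unfold flow_profit.
  pose proof (Hconv a b t Ha Hb Ht) as Hc.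
  assert (Hlin : (t * a + (1 - t) * b) / D * x
                 = t * (a / D * x) + (1 - t) * (b / D * x))
    by (unfold Rdiv; ring).
  rewrite Hlin. lra.
Qed.

Lemma flow_profit_lt_reward (D : R) (c : R -> R) (x y h : R) :
  0 < D -> x < y -> 0 < h -> flow_profit D c x h < flow_profit D c y h.
Proof.
  intros HD Hxy Hh. unfold flow_profit.
  assert (0 < h / D) by (apply Rdiv_lt_0_compat; lra).
  assert (h / D * x < h / D * y) by (apply Rmult_lt_compat_l; lra).
  lra.
Qed.

(* A strict lower bound of a concave function at x is met, weakly, further right:
   either at x + 1 or at a suitable point of the segment [x, x + 1]. *)
Lemma concave_ge_right (g : R -> R) (x m : R) :
  concave_on_nonneg g -> 0 <= x -> g x > m -> exists x', x < x' /\ g x' >= m.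
Proof.
  intros Hg Hx Hgx.
  destruct (Rle_lt_dec m (g (x + 1))) as [Hy | Hy].
  - exists (x + 1). split; lra.
  - set (s := (g x - m) / (g x - g (x + 1))).
    assert (Hs0 : 0 < s) by (apply Rdiv_lt_0_compat; lra).
    assert (Hs1 : s < 1).
    { apply (Rmult_lt_reg_r (g x - g (x + 1))); [lra |].
      unfold s, Rdiv. rewrite Rmult_assoc, Rinv_l by lra. lra. }
    assert (Hval : (1 - s) * g x + (1 - (1 - s)) * g (x + 1) = m).
    { unfold s. field. lra. }
    exists ((1 - s) * x + (1 - (1 - s)) * (x + 1)). split.
    + nra.
    + rewrite <- Hval. apply Hg; lra.
Qed.

Lemma concave_gt_between (g : R -> R) (a b d m : R) :
  concave_on_nonneg g -> 0 <= a -> a <= b < d -> g a > m -> g d >= m -> g b > m.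
Proof.
  intros Hg Ha Hab Hga Hgd.
  set (t := (d - b) / (d - a)).
  assert (Ht0 : 0 < t) by (apply Rdiv_lt_0_compat; lra).
  assert (Ht1 : t <= 1).
  { apply (Rmult_le_reg_r (d - a)); [lra |].
    unfold t, Rdiv. rewrite Rmult_assoc, Rinv_l by lra. lra. }
  assert (Hb : t * a + (1 - t) * d = b) by (unfold t; field; lra).
  pose proof (Hg a d t Ha ltac:(lra) ltac:(lra)) as Hconc.
  rewrite Hb in Hconc. nra.
Qed.

Lemma hbarbar_ge (D : R) (c : R -> R) (rho rhot h x : R) :
  h < x -> flow_profit D c rhot x >= flow_profit D c rho h ->
  Rbar_le (Finite x) (hbarbar D c rho rhot h).
Proof.
  intros Hx Hfx. unfold hbarbar.
  destruct (Lub_Rbar_correct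
    (fun h' => h < h' /\ flow_profit D c rhot h' >= flow_profit D c rho h)) as [Hub _].
  apply Hub. split; assumption.
Qed.

Lemma hbarbar_witness (D : R) (c : R -> R) (rho rhot h b : R) :
  Rbar_lt (Finite b) (hbarbar D c rho rhot h) ->
  exists x, b < x /\ h < x /\ flow_profit D c rhot x >= flow_profit D c rho h.
Proof.
  intros Hlt. apply NNPP. intros Hnone.
  assert (Hle : Rbar_le (hbarbar D c rho rhot h) (Finite b)).
  { unfold hbarbar.
    destruct (Lub_Rbar_correct
      (fun h' => h < h' /\ flow_profit D c rhot h' >= flow_profit D c rho h)) as [_ Hleast].
    apply Hleast. intros x [Hx Hfx]. simpl.
    apply Rnot_lt_le. intros Hbx. apply Hnone. exists x. auto. }
  apply (Rbar_lt_not_le _ _ Hlt Hle).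
Qed.

Theorem proposition1
  (H tau Rw Phi Rwt Phit L : R) (c : R -> R) (htilde hhat : R)
  (HH : 0 < H) (Htau : 0 < tau) (HL : 0 < L)
  (HRw : 0 <= Rw) (HPhi : 0 <= Phi) (HRwt : 0 <= Rwt) (HPhit : 0 <= Phit)
  (HReq : Rwt = Rw) (HPhilt : Phi < Phit)
  (Hconv : convex_on_nonneg c)
  (Hht0 : 0 <= htilde)
  (Hhtmax : forall h, 0 <= h ->
     flow_profit (difficulty tau H) c (Rwt + Phit) h
       <= flow_profit (difficulty tau H) c (Rwt + Phit) htilde)
  (Hfin : forall h, 0 < h < H ->
     Rbar_lt (hbarbar (difficulty tau H) c (Rw + Phi) (Rwt + Phit) h) p_infty)
  (Hmono : forall h1 h2, 0 < h1 < H -> 0 < h2 < H -> h1 <= h2 ->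
     Rbar_le (hbarbar (difficulty tau H) c (Rw + Phi) (Rwt + Phit) h1)
             (hbarbar (difficulty tau H) c (Rw + Phi) (Rwt + Phit) h2))
  (Hhhat : 0 < hhat < H)
  (Hhhat_eq : Rbar_plus (Finite hhat)
                (hbarbar (difficulty tau H) c (Rw + Phi) (Rwt + Phit) hhat) = Finite H) :
  0 < hhat < H / 2 /\
  (forall hstar, hhat < hstar < H ->
     ~ ICC (difficulty tau H) c (Rw + Phi) (Rwt + Phit) H hstar htilde L 0).
Proof.
  set (D := difficulty tau H). set (rho := Rw + Phi). set (rhot := Rwt + Phit).
  fold D rho rhot in Hhtmax, Hmono, Hhhat_eq.
  assert (HD : 0 < D) by (unfold D, difficulty; nra).
  assert (Hrho : rho < rhot) by (unfold rho, rhot; lra).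
  pose proof (flow_profit_concave D rhot c Hconv) as Hconc.
  assert (Hbb : hbarbar D c rho rhot hhat = Finite (H - hhat)).
  { destruct (hbarbar D c rho rhot hhat); simpl in Hhhat_eq; try discriminate.
    injection Hhhat_eq as Hsum. f_equal. lra. }
  (* some attack level above hhat beats honest mining at hhat, so H - hhat > hhat *)
  destruct (concave_ge_right _ hhat _ Hconc ltac:(lra)
              (flow_profit_lt_reward D c rho rhot hhat HD Hrho ltac:(lra)))
    as [x [Hx Hfx]].
  pose proof (hbarbar_ge D c rho rhot hhat x Hx Hfx) as Hxle.
  rewrite Hbb in Hxle. simpl in Hxle.
  split; [lra |].
  intros hstar Hhs Hicc. unfold ICC in Hicc. fold D rho rhot in Hicc.
  set (hl := h_low H hstar) in Hicc.
  assert (Hhl : H - hstar <= hl < H - hhat)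
    by (unfold hl, h_low; split; [apply Rmax_r | apply Rmax_lub_lt; lra]).
  (* a witness above h_low for hbarbar(hstar) >= hbarbar(hhat) = H - hhat *)
  assert (Hlt : Rbar_lt (Finite hl) (hbarbar D c rho rhot hstar)).
  { apply (Rbar_lt_le_trans _ (Finite (H - hhat))); [simpl; lra |].
    rewrite <- Hbb. apply Hmono; lra. }
  destruct (hbarbar_witness D c rho rhot hstar hl Hlt) as [x' [Hx'hl [_ Hfx']]].
  assert (Hmax : flow_profit D c rhot htilde > flow_profit D c rho hstar).
  { pose proof (Hhtmax hstar ltac:(lra)).
    pose proof (flow_profit_lt_reward D c rho rhot hstar HD Hrho ltac:(lra)). lra. }
  assert (Hattack : flow_profit D c rhot (Rmax htilde hl) > flow_profit D c rho hstar).
  { destruct (Rle_lt_dec htilde hl) as [Hle | Hgt].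
    - rewrite Rmax_right by exact Hle.
      apply (concave_gt_between _ htilde hl x'); auto; lra.
    - rewrite Rmax_left by lra. exact Hmax. }
  assert (0 < (flow_profit D c rhot (Rmax htilde hl) - flow_profit D c rho hstar) * L)
    by (apply Rmult_lt_0_compat; lra).
  lra.
Qed.
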